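(* Let $X\subseteq\mathbb{C}^n$ be a complex analytic set, $x\in X$, $\mathcal M\subseteq\mathcal O_{X,x}^p$ a submodule and $k\in\mathbb N$. Then, at $(x,x)$: (a) $I_\Delta^{k}\,J_2\big((J_k(\mathcal M))_D\big)\subseteq J_{2k}(\mathcal M_D)$; (b) if $J_k(\mathcal M)$ is a principal ideal, then $I_\Delta^{k-1}\,J_2\big((J_k(\mathcal M))_D\big)\subseteq J_{2k}(\mathcal M_D)$.
   Context: $z_1,\dots,z_n$ are coordinates on $\mathbb C^n$; $\pi_1,\pi_2:X\times X\to X$ are the projections, and $I_\Delta=(z_1\circ\pi_1-z_1\circ\pi_2,\dots,z_n\circ\pi_1-z_n\circ\pi_2)$ is the ideal of the diagonal in $\mathcal O_{X\times X}$. For $h\in\mathcal O_X^q$, $h_D=(h\circ\pi_1,h\circ\pi_2)\in\mathcal O^{2q}_{X\times X}$; for a submodule or ideal $N\subseteq\mathcal O_X^q$, $N_D$ is the submodule of $\mathcal O^{2q}_{X\times X}$ generated by $\{h_D:h\in N\}$. $J_m(N)$ is the ideal generated by the $m\times m$ minors of a matrix of generators of $N$ (so $J_k(\mathcal M)$ is an ideal of $\mathcal O_X$, $(J_k(\mathcal M))_D\subseteq\mathcal O^2_{X\times X}$, and $J_2$ of it is an ideal). *)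

From HB Require Import structures.
From mathcomp Require Import all_boot all_order all_algebra.
From mathcomp Require Import all_classical all_reals all_analysis.
From mathcomp Require Import complex.
Set Implicit Arguments. Unset Strict Implicit. Unset Printing Implicit Defensive.
Import Order.TTheory GRing.Theory Num.Theory.
Import numFieldNormedType.Exports.
Local Open Scope ring_scope.
Local Open Scope classical_set_scope.

Section Germs.
Variable R : realType.
Local Notation C := R[i].
Variable E : normedModType C.

Definition holo_germ (y : E) (f : E -> C) : Prop :=
  \forall z \near y, differentiable (f : E -> C^o) z.

Definition germ_eq (Y : set E) (y : E) (f g : E -> C) : Prop :=
  \forall z \near y, Y z -> f z = g z.

(* The ideal of O_{Y,y} generated by S, as the set of (representatives of)
   germs of holomorphic functions which on Y near y agree with a finite
   O-linear combination of elements of S. *)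
Definition ideal_gen (Y : set E) (y : E) (S : set (E -> C)) : set (E -> C) :=
  fun f => holo_germ y f /\
    exists (m : nat) (a s : 'I_m -> E -> C),
      (forall j, holo_germ y (a j)) /\ (forall j, S (s j)) /\
      germ_eq Y y f (fun z => \sum_(j < m) a j z * s j z).

Definition ideal_mul (Y : set E) (y : E) (I J : set (E -> C)) : set (E -> C) :=
  ideal_gen Y y [set h | exists f g, I f /\ J g /\ h = (fun z => f z * g z)].

Definition ideal_pow (Y : set E) (y : E) (I : set (E -> C)) (k : nat) :
    set (E -> C) :=
  iter k (ideal_mul Y y I) (ideal_gen Y y [set (fun _ => 1)]).

Definition principal_ideal (Y : set E) (y : E) (I : set (E -> C)) : Prop :=
  exists g, holo_germ y g /\ I = ideal_gen Y y [set g].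

(* Elements of O_{Y,y}^q are represented by q-tuples of functions. *)
Definition submodule (Y : set E) (y : E) (q : nat)
    (M : set ('I_q -> E -> C)) : Prop :=
  [/\ forall h, M h -> forall i, holo_germ y (h i),
      M (fun _ _ => 0),
      forall h h', M h -> M h' -> M (fun i z => h i z + h' i z),
      forall a h, holo_germ y a -> M h -> M (fun i z => a z * h i z) &
      forall h h', (forall i, holo_germ y (h' i)) ->
        (forall i, germ_eq Y y (h i) (h' i)) -> M h -> M h'].

(* J_m(N): the ideal generated by the m x m minors of the (possibly infinite)
   matrix whose columns are the generators S of N: an m x m minor is the
   determinant of the submatrix given by m distinct rows and m columns
   taken from S. *)
Definition Jminors (Y : set E) (y : E) (q m : nat)
    (S : set ('I_q -> E -> C)) : set (E -> C) :=
  ideal_gen Y y [set d | exists (r : 'I_m -> 'I_q) (c : 'I_m -> 'I_q -> E -> C),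
      [/\ injective r, forall j, S (c j) &
          d = (fun z => \det (\matrix_(i, j) c j (r i) z))]].
End Germs.

Section Doubling.
Variable R : realType.
Local Notation C := R[i].
Variable V : normedModType C.

(* h_D = (h o pi_1, h o pi_2) *)
Definition double (q : nat) (h : 'I_q -> V -> C) : 'I_(q + q) -> (V * V)%type -> C :=
  fun i w => match fintype.split i with inl i1 => h i1 w.1 | inr i2 => h i2 w.2 end.

(* generating set of N_D *)
Definition doubled (q : nat) (N : set ('I_q -> V -> C)) :
    set ('I_(q + q) -> (V * V)%type -> C) := [set double h | h in N].

(* generating set of I_D for an ideal I of O_X (vectors of length 1) *)
Definition doubled_ideal (I : set (V -> C)) :
    set ('I_(1 + 1) -> (V * V)%type -> C) :=
  [set double (fun _ : 'I_1 => g) | g in I].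
End Doubling.

Section Analytic.
Variable R : realType.
Local Notation C := R[i].

Definition analytic_set (n : nat) (X : set 'rV[C]_n) : Prop :=
  forall a, X a -> exists (m : nat) (g : 'I_m -> 'rV[C]_n -> C),
    (forall j, @holo_germ R ('rV[C]_n : normedModType C) a (g j)) /\
    \forall z \near (a : ('rV[C]_n : normedModType C)), (X z <-> forall j, g j z = 0).

Definition setXX (n : nat) (X : set 'rV[C]_n) : set ('rV[C]_n * 'rV[C]_n)%type :=
  [set w | X w.1 /\ X w.2].

Definition I_Delta (n : nat) (X : set 'rV[C]_n) (x : 'rV[C]_n) :
    set (('rV[C]_n * 'rV[C]_n)%type -> C) :=
  @ideal_gen R (('rV[C]_n * 'rV[C]_n)%type : normedModType C) (setXX X) (x, x)
    [set (fun w : ('rV[C]_n * 'rV[C]_n)%type => w.1 ord0 i - w.2 ord0 i) | i in [set: 'I_n]].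
End Analytic.

From Pilot Require Import Defs.
From HB Require Import structures.
From mathcomp Require Import all_boot all_order all_algebra.
From mathcomp Require Import all_classical all_reals all_analysis.
From mathcomp Require Import complex.
From mathcomp Require Import fingroup perm.
From mathcomp Require Import ring.
Set Implicit Arguments. Unset Strict Implicit. Unset Printing Implicit Defensive.
Import Order.TTheory GRing.Theory Num.Theory.
Import numFieldNormedType.Exports.
Local Open Scope ring_scope.
Local Open Scope classical_set_scope.

(* Everything is reduced to generators.  An ideal [ideal_gen Y y S] is
   contained in another one as soon as its generators S are, and the product
   of two generated ideals is generated by the products of generators; the
   power I_Delta^j is thus generated by products of j coordinate differences
   z_i(w.1) - z_i(w.2), and J_2((J_k M)_D) by the 2x2 minors
   F(w.1) G(w.2) - G(w.1) F(w.2) with F, G in J_k(M).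

   The heart of the matter is one determinant identity ([diff_minor]): for
   k x k minors m, m' of generators of M and holomorphic phi_1..phi_k, the
   germ  prod_b (phi_b(w.1) - phi_b(w.2)) * m(w.1) * m'(w.2)  is a 2k x 2k
   minor of a matrix whose columns are O-combinations of generators of M_D.
   (a) F(w.1) G(w.2) is a combination of products m(w.1) m'(w.2), and the
       phi_b are coordinate functions.
   (b) If J_k(M) is principal it is generated, up to a unit, by a single
       minor m (or it is zero); then the 2x2 minors are combinations of
       m(w.1) m(w.2) (g(w.1) - g(w.2)), which supplies the k-th difference
       factor phi_1 = g, so only k - 1 coordinate differences are needed. *)

Lemma split_lshift m n (j : 'I_m) : fintype.split (lshift n j) = inl j.
Proof. exact: (unsplitK (inl _ j)). Qed.

Lemma split_rshift m n (j : 'I_n) : fintype.split (rshift m j) = inr j.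
Proof. exact: (unsplitK (inr _ j)). Qed.

Lemma filterS4 (T : Type) (F : set_system T) {FF : Filter F} (P Q R S U : set T) :
  (forall x, P x -> Q x -> R x -> S x -> U x) -> F P -> F Q -> F R -> F S -> F U.
Proof.
move=> h fP fQ fR fS; near=> z; apply: h; by near: z.
Unshelve. all: by end_near. Qed.

Section Holomorphic.
Variables (R : realType) (E : normedModType R[i]) (y : E).
Local Notation C := R[i].
Local Notation holo := (@holo_germ R E y).

Lemma holo_cst (c : C) : holo (fun _ => c).
Proof. near=> z; exact: (@differentiable_cst _ _ (C^o)). Unshelve. all: by end_near. Qed.

Lemma holo_add f g : holo f -> holo g -> holo (fun z => f z + g z).
Proof.
move=> hf hg; near=> z.
apply: (@differentiableD _ _ _ (f : E -> C^o) g); by near: z.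
Unshelve. all: by end_near. Qed.

Lemma holo_opp f : holo f -> holo (fun z => - f z).
Proof.
move=> hf; near=> z.
apply: (@differentiableN _ _ _ (f : E -> C^o)); by near: z.
Unshelve. all: by end_near. Qed.

Lemma holo_mul f g : holo f -> holo g -> holo (fun z => f z * g z).
Proof.
move=> hf hg; near=> z.
apply: (@differentiableM _ _ (f : E -> C^o) g); by near: z.
Unshelve. all: by end_near. Qed.

Lemma holo_sub f g : holo f -> holo g -> holo (fun z => f z - g z).
Proof. by move=> hf hg; apply: holo_add => //; apply: holo_opp. Qed.

Lemma holo_sum (I : Type) (s : seq I) (F : I -> E -> C) :
  (forall i, holo (F i)) -> holo (fun z => \sum_(i <- s) F i z).
Proof.
move=> hF; elim: s => [|a s IH].
  by under [fun z => _]funext => z do rewrite big_nil; exact: holo_cst.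
by under [fun z => _]funext => z do rewrite big_cons; exact: holo_add.
Qed.

Lemma holo_prod (I : Type) (s : seq I) (F : I -> E -> C) :
  (forall i, holo (F i)) -> holo (fun z => \prod_(i <- s) F i z).
Proof.
move=> hF; elim: s => [|a s IH].
  by under [fun z => _]funext => z do rewrite big_nil; exact: holo_cst.
by under [fun z => _]funext => z do rewrite big_cons; exact: holo_mul.
Qed.

Lemma holo_det m (F : 'I_m -> 'I_m -> E -> C) :
  (forall i j, holo (F i j)) -> holo (fun z => \det (\matrix_(i, j) F i j z)).
Proof.
move=> hF.
have -> : (fun z => \det (\matrix_(i, j) F i j z)) =
    (fun z => \sum_(s : 'S_m) ((-1) ^+ s * \prod_(i < m) F i (s i) z)).
  apply: funext => z; apply: eq_bigr => s _.
  by congr (_ * _); apply: eq_bigr => i _; rewrite mxE.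
apply: holo_sum => s; apply: holo_mul; first exact: holo_cst.
exact: holo_prod.
Qed.

Lemma holo_neq0_near u : holo u -> u y != 0 -> \forall z \near y, u z != 0.
Proof.
move=> hu uy.
have du : differentiable (u : E -> C^o) y := nbhs_singleton hu.
exact: (@cvgr_neq0 _ (C^o) _ _ _ (u : E -> C^o) (u y) (differentiable_continuous du) uy).
Qed.

Lemma holo_div c u : holo c -> holo u -> (\forall z \near y, u z != 0) ->
  holo (fun z => c z / u z).
Proof.
move=> hc hu nz; move: hc hu nz; apply: filterS3 => z dc du nz.
apply: (@differentiableM _ _ (c : E -> C^o) (fun z => (u z)^-1)) => //.
exact: (@differentiableV _ _ (u : E -> C^o)).
Qed.
End Holomorphic.

Section Projections.
Variables (R : realType) (E : normedModType R[i]).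
Local Notation C := R[i].

Lemma near_fst (P : E -> Prop) (y y' : E) :
  (\forall z \near y, P z) -> \forall w \near (y, y'), P w.1.
Proof.
have fst_cont : continuous (fst : E * E -> E) by move=> ?; exact: cvg_fst.
by move=> hP; exact: (fst_cont (y, y') _ hP).
Qed.

Lemma near_snd (P : E -> Prop) (y y' : E) :
  (\forall z \near y', P z) -> \forall w \near (y, y'), P w.2.
Proof.
have snd_cont : continuous (snd : E * E -> E) by move=> ?; exact: cvg_snd.
by move=> hP; exact: (snd_cont (y, y') _ hP).
Qed.

Lemma holo_fst (h : E -> C) (y y' : E) :
  holo_germ y h -> holo_germ (y, y') (fun w : E * E => h w.1).
Proof.
move=> hh; move: (near_fst y' hh); apply: filterS => w hw.
apply: (@differentiable_comp _ _ _ _ fst (h : E -> C^o)) => //.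
by apply: linear_differentiable => v; exact: cvg_fst.
Qed.

Lemma holo_snd (h : E -> C) (y y' : E) :
  holo_germ y' h -> holo_germ (y, y') (fun w : E * E => h w.2).
Proof.
move=> hh; move: (near_snd y hh); apply: filterS => w hw.
apply: (@differentiable_comp _ _ _ _ snd (h : E -> C^o)) => //.
by apply: linear_differentiable => v; exact: cvg_snd.
Qed.

Variables (Y : set E) (y : E).
Local Notation Y2 := [set w : E * E | Y w.1 /\ Y w.2].

Lemma germ_fst f g : germ_eq Y y f g ->
  germ_eq Y2 (y, y) (fun w => f w.1) (fun w => g w.1).
Proof. by move=> e; move: (near_fst y e); apply: filterS => w h [Y1 _]; exact: h. Qed.

Lemma germ_snd f g : germ_eq Y y f g ->
  germ_eq Y2 (y, y) (fun w => f w.2) (fun w => g w.2).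
Proof. by move=> e; move: (near_snd y e); apply: filterS => w h [_ Y2]; exact: h. Qed.

Lemma ideal_fst S f : ideal_gen Y y S f ->
  ideal_gen Y2 (y, y) [set (fun w : E * E => s w.1) | s in S] (fun w => f w.1).
Proof.
move=> [hf [m [a [s [ha [hs e]]]]]]; split; first exact: holo_fst.
exists m, (fun j w => a j w.1), (fun j w => s j w.1); split; first by move=> j; exact: holo_fst.
by split; [move=> j; exists (s j) | exact: germ_fst e].
Qed.

Lemma ideal_snd S f : ideal_gen Y y S f ->
  ideal_gen Y2 (y, y) [set (fun w : E * E => s w.2) | s in S] (fun w => f w.2).
Proof.
move=> [hf [m [a [s [ha [hs e]]]]]]; split; first exact: holo_snd.
exists m, (fun j w => a j w.2), (fun j w => s j w.2); split; first by move=> j; exact: holo_snd.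
by split; [move=> j; exists (s j) | exact: germ_snd e].
Qed.
End Projections.

Section Ideals.
Variables (R : realType) (E : normedModType R[i]) (Y : set E) (y : E).
Local Notation C := R[i].
Local Notation holo := (@holo_germ R E y).
Local Notation ideal S := (@ideal_gen R E Y y S).

Lemma ideal_holo S f : ideal S f -> holo f.
Proof. by case. Qed.

Lemma ideal_germ S f g : holo f -> germ_eq Y y f g -> ideal S g -> ideal S f.
Proof.
move=> hf efg [_ [m [a [s [ha [hs egs]]]]]]; split => //.
exists m, a, s; split => //; split => //.
by move: efg egs; apply: filterS2 => z e1 e2 Yz; rewrite e1 // e2.
Qed.

Lemma ideal0 S : ideal S (fun _ => 0).
Proof.
split; first exact: holo_cst.
exists 0%N, (fun _ _ => 0), (fun _ _ => 0); split; first by case.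
split; first by case.
by near=> z => _; rewrite big_ord0.
Unshelve. all: by end_near. Qed.

Lemma ideal_generator S s : S s -> holo s -> ideal S s.
Proof.
move=> Ss hs; split => //.
exists 1%N, (fun _ _ => 1), (fun _ => s); split; first by move=> _; exact: holo_cst.
split => //.
by near=> z => _; rewrite big_ord1 mul1r.
Unshelve. all: by end_near. Qed.

Lemma idealD S f g : ideal S f -> ideal S g -> ideal S (fun z => f z + g z).
Proof.
move=> [hf [m1 [a1 [s1 [ha1 [hs1 e1]]]]]] [hg [m2 [a2 [s2 [ha2 [hs2 e2]]]]]].
split; first exact: holo_add.
exists (m1 + m2)%N,
  (fun j => match fintype.split j with inl j1 => a1 j1 | inr j2 => a2 j2 end),
  (fun j => match fintype.split j with inl j1 => s1 j1 | inr j2 => s2 j2 end).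
split; first by move=> j; case: (fintype.split j).
split; first by move=> j; case: (fintype.split j).
move: e1 e2; apply: filterS2 => z e1 e2 Yz.
rewrite big_split_ord /= e1 // e2 //.
by congr (_ + _); apply: eq_bigr => j _; rewrite ?split_lshift ?split_rshift.
Qed.

Lemma idealM S a f : holo a -> ideal S f -> ideal S (fun z => a z * f z).
Proof.
move=> ha [hf [m [b [s [hb [hs e]]]]]].
split; first exact: holo_mul.
exists m, (fun j z => a z * b j z), s; split; first by move=> j; exact: holo_mul.
split => //; move: e; apply: filterS => z e Yz.
by rewrite e // big_distrr; apply: eq_bigr => j _ /=; rewrite mulrA.
Qed.

Lemma idealB S f g : ideal S f -> ideal S g -> ideal S (fun z => f z - g z).
Proof.
move=> hf hg; have := idealD hf (idealM (holo_cst y (-1)) hg).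
by under [fun z => _ + _]funext => z do rewrite mulN1r.
Qed.

Lemma ideal_sum S (I : Type) (r : seq I) (F : I -> E -> C) :
  (forall i, ideal S (F i)) -> ideal S (fun z => \sum_(i <- r) F i z).
Proof.
move=> hF; elim: r => [|a r IH].
  by under [fun z => _]funext => z do rewrite big_nil; exact: ideal0.
by under [fun z => _]funext => z do rewrite big_cons; exact: idealD.
Qed.

Lemma ideal_gen_sub S S' : S `<=` ideal S' -> ideal S `<=` ideal S'.
Proof.
move=> hS f [hf [m [a [s [ha [hs e]]]]]].
apply: ideal_germ (e) _ => //.
by apply: ideal_sum => j; apply: idealM => //; exact: hS.
Qed.

Lemma ideal_mul_gen S1 S2 T f g :
  (forall s, S1 s -> holo s) ->
  (forall s t, S1 s -> S2 t -> ideal T (fun z => s z * t z)) ->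
  ideal S1 f -> ideal S2 g -> ideal T (fun z => f z * g z).
Proof.
move=> h1 hST [hf [m [a [s [ha [hs e]]]]]] hg.
have hsg j : ideal T (fun z => s j z * g z).
  case: hg => [hg [m2 [b [t [hb [ht e2]]]]]].
  apply: (@ideal_germ _ _ (fun z => \sum_(l < m2) b l z * (s j z * t l z))
     (holo_mul (h1 _ (hs j)) hg)).
    move: e2; apply: filterS => z e2 Yz.
    by rewrite e2 // big_distrr; apply: eq_bigr => l _ /=; rewrite mulrCA.
  by apply: ideal_sum => l; apply: idealM => //; exact: hST.
apply: (@ideal_germ _ _ (fun z => \sum_(j < m) a j z * (s j z * g z))
     (holo_mul hf (ideal_holo hg))).
  move: e; apply: filterS => z e Yz.
  by rewrite e // big_distrl /=; apply: eq_bigr => j _; rewrite mulrA.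
by apply: ideal_sum => j; apply: idealM.
Qed.

Definition products (S : set (E -> C)) (j : nat) : set (E -> C) :=
  [set h | exists s : 'I_j -> E -> C,
     (forall t, S (s t)) /\ h = (fun z => \prod_(t < j) s t z)].

Lemma holo_products S j s : (forall d, S d -> holo d) -> products S j s -> holo s.
Proof. by move=> hS [u [hu ->]]; apply: holo_prod => t; exact: hS. Qed.

Lemma ideal_pow_sub S j : (forall s, S s -> holo s) ->
  ideal_pow Y y (ideal S) j `<=` ideal (products S j).
Proof.
move=> hS; elim: j => [|j IH].
  apply: ideal_gen_sub => _ ->; apply: ideal_generator; last exact: holo_cst.
  by exists (fun _ _ => 1); split; [case | apply: funext => z; rewrite big_ord0].
apply: ideal_gen_sub => _ [f [g [hf [hg ->]]]].
apply: (ideal_mul_gen hS) hf (IH _ hg) => s p Ss hp.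
apply: ideal_generator; last by apply: holo_mul; [exact: hS | exact: holo_products hp].
case: hp => [u [hu ->]].
exists (fun t => if unlift ord0 t is Some t' then u t' else s).
split; first by move=> t; case: (unlift ord0 t).
apply: funext => z; rewrite big_ord_recl /= unlift_none; congr (_ * _).
by apply: eq_bigr => t _; rewrite liftK.
Qed.

Lemma ideal_mul_pow_sub D S T (I' : set (E -> C)) j :
  (forall d, D d -> holo d) -> I' `<=` ideal S ->
  (forall pi s, products D j pi -> S s -> ideal T (fun z => pi z * s z)) ->
  ideal_mul Y y (ideal_pow Y y (ideal D) j) I' `<=` ideal T.
Proof.
move=> hD hI hT; apply: ideal_gen_sub => _ [f [g [hf [hg ->]]]].
apply: (ideal_mul_gen _ hT (ideal_pow_sub hD hf) (hI _ hg)).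
by move=> s; apply: holo_products.
Qed.

Lemma principal_coef g0 F : ideal [set g0] F ->
  exists2 c, holo c & germ_eq Y y F (fun z => c z * g0 z).
Proof.
move=> [hF [m [a [s [ha [hs e]]]]]].
exists (fun z => \sum_(j < m) a j z); first exact: holo_sum.
move: e; apply: filterS => z e Yz; rewrite e // big_distrl /=.
by apply: eq_bigr => j _; rewrite (hs j).
Qed.

(* A principal ideal of the local ring is generated by one of any given set
   of generators, unless it is zero (a form of Nakayama's lemma). *)
Lemma principal_generator S : (forall s, S s -> holo s) ->
  principal_ideal Y y (ideal S) ->
  (exists2 s, S s & forall F, ideal S F ->
     exists2 a, holo a & germ_eq Y y F (fun z => a z * s z)) \/
  (forall F, ideal S F -> germ_eq Y y F (fun _ => 0)).
Proof.
move=> hS [g0 [hg0 eI]].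
have coef F : ideal S F -> exists2 c, holo c & germ_eq Y y F (fun z => c z * g0 z).
  by rewrite eI; exact: principal_coef.
have : ideal S g0 by rewrite eI; exact: ideal_generator.
case=> _ [m [e [s [he [hs eg]]]]].
have /fin_all_exists [u hu] l : exists u, holo u /\ germ_eq Y y (s l) (fun z => u z * g0 z).
  by have [u ? ?] := coef _ (ideal_generator (hs l) (hS _ (hs l))); exists u.
have [[l ul]|nul] := pselect (exists l, u l y != 0).
  left; exists (s l) => // F /coef [c hc ec].
  have unz := holo_neq0_near (hu l).1 ul.
  exists (fun z => c z / u l z); first exact: holo_div (hu l).1 unz.
  move: ec (hu l).2 unz; apply: filterS3 => z e1 e2 nz Yz.
  by rewrite e1 // e2 // mulrA divfK.
right; pose sf z := \sum_(l < m) e l z * u l z.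
have sf1 : sf y - 1 != 0.
  rewrite /sf big1 ?sub0r ?oppr_eq0 ?oner_eq0 // => l _.
  by case: (eqVneq (u l y) 0) => [->|ne]; [rewrite mulr0 | case: nul; exists l].
have nz : \forall z \near y, sf z - 1 != 0.
  apply: holo_neq0_near sf1; apply: holo_sub (holo_cst _ _).
  by apply: holo_sum => l; apply: holo_mul => //; exact: (hu l).1.
have hall : \forall z \near y, forall l, Y z -> s l z = u l z * g0 z.
  exact: (filter_forall (nbhs_filter _) (fun l => (hu l).2)).
(* g0 = sum_l e_l u_l g0, so g0 (sf - 1) = 0 with sf - 1 a unit *)
have g00 : germ_eq Y y g0 (fun _ => 0).
  move: eg hall nz; apply: filterS3 => z e1 e2 nz Yz.
  have : g0 z * (sf z - 1) = 0.
    apply/eqP; rewrite mulrBr mulr1 subr_eq0; apply/eqP.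
    rewrite {2}(e1 Yz) /sf big_distrr /=.
    by apply: eq_bigr => l _; rewrite (e2 l Yz); ring.
  by move/eqP; rewrite mulf_eq0 (negPf nz) orbF => /eqP.
move=> F /coef [c _ ec]; move: ec g00; apply: filterS2 => z e1 e2 Yz.
by rewrite e1 // e2 // mulr0.
Qed.
End Ideals.

Lemma det_expand (K : comPzRingType) m N (a : 'I_m -> 'I_N -> K)
    (B : 'I_m -> 'I_N -> 'I_m -> K) :
  \det (\matrix_(i, j) \sum_(l < N) a j l * B j l i) =
  \sum_(f : {ffun 'I_m -> 'I_N}) (\prod_j a j (f j)) * \det (\matrix_(i, j) B j (f j) i).
Proof.
rewrite /determinant.
under eq_bigr => s _.
  rewrite (eq_bigr (fun i => \sum_(l < N) a (s i) l * B (s i) l i)); last first.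
    by move=> i _; rewrite mxE.
  rewrite bigA_distr_bigA /= big_distrr /=.
  rewrite (reindex_inj (h := fun f : {ffun 'I_m -> 'I_N} => [ffun i => f (s i)])); last first.
    move=> f1 f2 /ffunP e; apply/ffunP => i.
    by have := e ((s^-1)%g i); rewrite !ffunE permKV.
  over.
rewrite exchange_big /=; apply: eq_bigr => f _.
rewrite big_distrr /=; apply: eq_bigr => s _.
rewrite big_split /= mulrCA; congr (_ * _).
  by rewrite [RHS](reindex_inj (@perm_inj _ s)); apply: eq_bigr => i _; rewrite ffunE.
by congr (_ * _); apply: eq_bigr => i _; rewrite ffunE mxE.
Qed.

Lemma det22 (K : comNzRingType) (A : 'M[K]_2) : \det A = A 0 0 * A 1 1 - A 0 1 * A 1 0.
Proof.
rewrite (expand_det_row _ 0) !big_ord_recl big_ord0 addr0 /cofactor !det_mx11 !mxE /=.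
rewrite expr0 mul1r expr1 mulN1r mulrN.
by congr (_ * A _ _ - A _ _ * A _ _); apply: val_inj.
Qed.

Section Minors.
Variables (R : realType) (E : normedModType R[i]) (Y : set E) (y : E).
Local Notation C := R[i].
Local Notation holo := (@holo_germ R E y).

Definition minor q m (h : 'I_m -> 'I_q -> E -> C) (r : 'I_m -> 'I_q) (z : E) : C :=
  \det (\matrix_(i, j) h j (r i) z).

Definition minor_set q m (S : set ('I_q -> E -> C)) : set (E -> C) :=
  [set d | exists (r : 'I_m -> 'I_q) (c : 'I_m -> 'I_q -> E -> C),
      [/\ injective r, forall j, S (c j) & d = (fun z => \det (\matrix_(i, j) c j (r i) z))]].

Lemma holo_minor_set q m (S : set ('I_q -> E -> C)) d :
  (forall s, S s -> forall i, holo (s i)) -> minor_set m S d -> holo d.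
Proof. by move=> hS [r [c [_ hc ->]]]; apply: holo_det => i j; exact: hS. Qed.

Lemma minor_comb q m N (S : set ('I_q -> E -> C)) (r : 'I_m -> 'I_q)
    (al : 'I_m -> 'I_N -> E -> C) (s : 'I_m -> 'I_N -> 'I_q -> E -> C) :
  (forall s, S s -> forall i, holo (s i)) ->
  injective r -> (forall j l, holo (al j l)) -> (forall j l, S (s j l)) ->
  Jminors Y y m S (fun z => \det (\matrix_(i, j) \sum_(l < N) al j l z * s j l (r i) z)).
Proof.
move=> hS ri hal hs.
under [fun z => _]funext => z
  do rewrite (det_expand (fun j l => al j l z) (fun j l i => s j l (r i) z)).
apply: ideal_sum => f; apply: idealM; first exact: holo_prod.
apply: ideal_generator; first by exists r, (fun j => s j (f j)).
by apply: holo_det => i j; apply: hS.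
Qed.
End Minors.

Section Doubling.
Variables (R : realType) (E : normedModType R[i]).
Local Notation C := R[i].

Lemma double_lshift q (g : 'I_q -> E -> C) a w : Defs.double g (lshift q a) w = g a w.1.
Proof. by rewrite /Defs.double split_lshift. Qed.

Lemma double_rshift q (g : 'I_q -> E -> C) a w : Defs.double g (rshift q a) w = g a w.2.
Proof. by rewrite /Defs.double split_rshift. Qed.

Lemma holo_double (y : E) q (g : 'I_q -> E -> C) : (forall i, holo_germ y (g i)) ->
  forall i, holo_germ (y, y) (Defs.double g i).
Proof.
move=> hg i; rewrite /Defs.double; case: (fintype.split i) => a.
  exact: holo_fst.
exact: holo_snd.
Qed.

Lemma J2_doubled_sub (Y2 : set (E * E)) (w0 : E * E) (I : set (E -> C))
    (S : set (E * E -> C)) :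
  (forall F G, I F -> I G ->
     ideal_gen Y2 w0 S (fun w => F w.1 * G w.2 - G w.1 * F w.2)) ->
  Jminors Y2 w0 2 (doubled_ideal I) `<=` ideal_gen Y2 w0 S.
Proof.
move=> hIS; apply: ideal_gen_sub => _ [r [c [ri hc ->]]].
have /fin_all_exists [F hF] j :
    exists F : E -> C, I F /\ c j = Defs.double (fun _ : 'I_1 => F).
  by have [F hF <-] := hc j; exists F.
have [[I0 e0] [I1 e1]] := (hF 0, hF 1).
under [fun z => _]funext => w do rewrite det22 !mxE e0 e1.
have r01 : r 0 != r 1 by apply/eqP => /ri.
have hr i : r i = lshift 1 ord0 \/ r i = rshift 1 ord0.
  by rewrite -(splitK (r i)); case: (fintype.split (r i)) => a; rewrite (ord1 a); [left|right].
case: (hr 0) (hr 1) r01 => -> [] -> //= _;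
  under [fun z => _]funext => w do rewrite !double_lshift !double_rshift.
  exact: hIS.
under [fun z => _]funext => w do rewrite [F 0 w.2 * _]mulrC [F 1 w.2 * _]mulrC.
exact: hIS.
Qed.
End Doubling.

Section Submodule.
Variables (R : realType) (n p : nat) (X : set 'rV[R[i]]_n) (x : 'rV[R[i]]_n)
  (M : set ('I_p -> 'rV[R[i]]_n -> R[i])).
Hypothesis hM : submodule X x M.
Local Notation C := R[i].
Local Notation V := 'rV[C]_n.

Lemma holo_coord (z0 : V) i : holo_germ z0 (fun z : V => z ord0 i).
Proof. near=> z; exact: differentiable_coord. Unshelve. all: by end_near. Qed.

Lemma holo_M h : M h -> forall i, holo_germ x (h i).
Proof. by case: hM => H _ _ _ _; exact: H. Qed.

Lemma M_scale a h : holo_germ x a -> M h -> M (fun i z => a z * h i z).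
Proof. by case: hM => _ _ _ H _; exact: H. Qed.

Lemma holo_doubled_M s : doubled M s -> forall i, holo_germ (x, x) (s i).
Proof. by move=> [h hh <-]; apply: holo_double; exact: holo_M. Qed.

Lemma holo_minor k m : minor_set k M m -> holo_germ x m.
Proof. exact: holo_minor_set holo_M. Qed.

Section DiffMinor.
Variables (k : nat) (phi : 'I_k -> V -> C) (h h' : 'I_k -> 'I_p -> V -> C)
  (r r' : 'I_k -> 'I_p).
Hypotheses (hphi : forall b, holo_germ x (phi b)) (ri : injective r) (ri' : injective r')
  (hh : forall j, M (h j)) (hh' : forall j, M (h' j)).

Let rows (i : 'I_(k + k)) : 'I_(p + p) :=
  match fintype.split i with inl a => lshift p (r a) | inr b => rshift p (r' b) end.

Lemma rows_inj : injective rows.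
Proof.
move=> i1 i2; rewrite /rows -[i1]splitK -[i2]splitK.
case: (fintype.split i1) => a1; case: (fintype.split i2) => a2 /=;
  rewrite ?split_lshift ?split_rshift.
- by move/lshift_inj/ri => ->.
- by move/eqP; rewrite eq_lrshift.
- by move/eqP; rewrite eq_rlshift.
- by move/rshift_inj/ri' => ->.
Qed.

(* Column a of the first half is (h_a)_D; column b of the second half is
   phi_b(w.1) (h'_b)_D - (phi_b h'_b)_D, which vanishes on the first copy
   and is (phi_b(w.1) - phi_b(w.2)) h'_b(w.2) on the second one. *)
Let coef (j : 'I_(k + k)) (l : 'I_2) (w : V * V) : C :=
  match fintype.split j with
  | inl _ => if val l == 0%N then 1 else 0
  | inr b => if val l == 0%N then phi b w.1 else -1 end.

Let column (j : 'I_(k + k)) (l : 'I_2) : 'I_p -> V -> C :=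
  match fintype.split j with
  | inl a => h a
  | inr b => if val l == 0%N then h' b else fun i z => phi b z * h' b i z end.

Lemma diff_matrix w :
  \matrix_(i, j) \sum_(l < 2) coef j l w * Defs.double (column j l) (rows i) w =
  block_mx (\matrix_(i, j) h j (r i) w.1) 0 (\matrix_(i, j) h j (r' i) w.2)
    (\matrix_(i, j) h' j (r' i) w.2 *m diag_mx (\row_b (phi b w.1 - phi b w.2))).
Proof.
apply/matrixP => i j; rewrite mxE -(splitK i) -(splitK j).
case: (fintype.split i) => a; case: (fintype.split j) => b;
  rewrite /= ?block_mxEul ?block_mxEur ?block_mxEdl ?block_mxEdr ?mul_mx_diag !mxE
    /coef /column /rows ?split_lshift ?split_rshift !big_ord_recl big_ord0 /=
    ?double_lshift ?double_rshift /=; ring.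
Qed.

Lemma diff_minor :
  Jminors (setXX X) (x, x) (2 * k) (doubled M)
    (fun w => (\prod_(b < k) (phi b w.1 - phi b w.2)) * (minor h r w.1 * minor h' r' w.2)).
Proof.
rewrite mul2n -addnn.
suff -> : (fun w => (\prod_(b < k) (phi b w.1 - phi b w.2)) *
                    (minor h r w.1 * minor h' r' w.2)) =
    (fun w => \det (\matrix_(i, j) \sum_(l < 2) coef j l w * Defs.double (column j l) (rows i) w)).
  apply: (@minor_comb _ _ _ _ _ _ _ _ rows coef (fun j l => Defs.double (column j l))
    holo_doubled_M rows_inj).
    move=> j l; rewrite /coef; case: (fintype.split j) => b; case: (_ == _);
      by [exact: holo_cst | exact: holo_fst].
  move=> j l; exists (column j l) => //; rewrite /column.
  by case: (fintype.split j) => a; [|case: (_ == _)]; [| |exact: M_scale].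
apply: funext => w; rewrite diff_matrix det_lblock det_mulmx det_diag /minor.
rewrite [in RHS](eq_bigr (fun b => phi b w.1 - phi b w.2)) => [|b _]; last by rewrite mxE.
ring.
Qed.
End DiffMinor.

Definition coord_diffs : set (V * V -> C) :=
  [set (fun w : V * V => w.1 ord0 i - w.2 ord0 i) | i in [set: 'I_n]].

Lemma holo_coord_diffs d : coord_diffs d -> holo_germ (x, x) d.
Proof.
move=> [i _ <-]; apply: holo_sub.
  exact: (@holo_fst _ _ (fun z : V => z ord0 i)) (holo_coord _ _).
exact: (@holo_snd _ _ (fun z : V => z ord0 i)) (holo_coord _ _).
Qed.

Lemma products_coord_diffs j pi : products coord_diffs j pi ->
  exists io : 'I_j -> 'I_n,
    pi = (fun w => \prod_(t < j) (w.1 ord0 (io t) - w.2 ord0 (io t))).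
Proof.
move=> [s [hs ->]].
have /fin_all_exists [io hio] t : exists i, s t = (fun w : V * V => w.1 ord0 i - w.2 ord0 i).
  by have [i _ <-] := hs t; exists i.
by exists io; apply: funext => w; apply: eq_bigr => t _; rewrite hio.
Qed.

Definition minor_pairs k : set (V * V -> C) :=
  [set t | exists m m', [/\ minor_set k M m, minor_set k M m' &
     t = (fun w => m w.1 * m' w.2)]].

Lemma Jminors_pairs k F G : Jminors X x k M F -> Jminors X x k M G ->
  ideal_gen (setXX X) (x, x) (minor_pairs k) (fun w => F w.1 * G w.2).
Proof.
move=> hF hG.
apply: (@ideal_mul_gen _ _ _ _ [set (fun w : V * V => s w.1) | s in minor_set k M]
   [set (fun w : V * V => s w.2) | s in minor_set k M]).
- by move=> _ [m hm <-]; exact: holo_fst (holo_minor hm).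
- move=> _ _ [m hm <-] [m' hm' <-]; apply: ideal_generator; first by exists m, m'.
  exact: holo_mul (holo_fst _ (holo_minor hm)) (holo_snd _ (holo_minor hm')).
- exact: ideal_fst hF.
- exact: ideal_snd hG.
Qed.

Lemma partA k :
  ideal_mul (setXX X) (x, x) (ideal_pow (setXX X) (x, x) (I_Delta X x) k)
     (Jminors (setXX X) (x, x) 2 (doubled_ideal (Jminors X x k M)))
  `<=` Jminors (setXX X) (x, x) (2 * k) (doubled M).
Proof.
apply: (@ideal_mul_pow_sub _ _ _ _ coord_diffs (minor_pairs k)).
- exact: holo_coord_diffs.
- apply: J2_doubled_sub => F G hF hG.
  exact: idealB (Jminors_pairs hF hG) (Jminors_pairs hG hF).
- move=> _ _ /products_coord_diffs [io ->]
    [_ [_ [[r [h [ri hh ->]]] [r' [h' [ri' hh' ->]]] ->]]].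
  exact: (@diff_minor k (fun b z => z ord0 (io b))) (fun b => holo_coord x _) ri ri' hh hh'.
Qed.

Definition minor_diffs k : set (V * V -> C) :=
  [set t | exists m g, [/\ minor_set k M m, holo_germ x g &
     t = (fun w => m w.1 * m w.2 * (g w.1 - g w.2))]].

Lemma principal_minor2 k F G : principal_ideal X x (Jminors X x k M) ->
  Jminors X x k M F -> Jminors X x k M G ->
  ideal_gen (setXX X) (x, x) (minor_diffs k) (fun w => F w.1 * G w.2 - G w.1 * F w.2).
Proof.
move=> hP hF hG.
have holoFG : holo_germ (x, x) (fun w : V * V => F w.1 * G w.2 - G w.1 * F w.2).
  have [hF' hG'] := (ideal_holo hF, ideal_holo hG).
  by apply: holo_sub; apply: holo_mul;
    [exact: holo_fst | exact: holo_snd | exact: holo_fst | exact: holo_snd].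
case: (@principal_generator _ _ X x (minor_set k M) (@holo_minor k) hP) => [[m hm dvd]|zero].
  (* F = a m and G = b m, so the minor is b(w.1) [m m (a(w.1) - a(w.2))]
     - a(w.1) [m m (b(w.1) - b(w.2))] *)
  have [a ha ea] := dvd F hF; have [b hb eb] := dvd G hG.
  have gen g : holo_germ x g -> ideal_gen (setXX X) (x, x) (minor_diffs k)
      (fun w => m w.1 * m w.2 * (g w.1 - g w.2)).
    move=> hg; apply: ideal_generator; first by exists m, g.
    have hm' := holo_minor hm.
    apply: holo_mul; first exact: holo_mul (holo_fst _ hm') (holo_snd _ hm').
    exact: holo_sub (holo_fst _ hg) (holo_snd _ hg).
  apply: (ideal_germ holoFG _ (idealB (idealM (holo_fst x hb) (gen _ ha))
                                      (idealM (holo_fst x ha) (gen _ hb)))).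
  move: (germ_fst ea) (germ_snd ea) (germ_fst eb) (germ_snd eb).
  by apply: filterS4 => w e1 e2 e3 e4 Xw; rewrite e1 // e2 // e3 // e4 //; ring.
apply: (ideal_germ holoFG _ (@ideal0 _ _ _ _ (minor_diffs k))).
move: (germ_fst (zero _ hF)) (germ_snd (zero _ hF)) (germ_fst (zero _ hG)) (germ_snd (zero _ hG)).
by apply: filterS4 => w e1 e2 e3 e4 Xw; rewrite e1 // e2 // e3 // e4 //; ring.
Qed.

Lemma partB k : principal_ideal X x (Jminors X x k.+1 M) ->
  ideal_mul (setXX X) (x, x) (ideal_pow (setXX X) (x, x) (I_Delta X x) k)
     (Jminors (setXX X) (x, x) 2 (doubled_ideal (Jminors X x k.+1 M)))
  `<=` Jminors (setXX X) (x, x) (2 * k.+1) (doubled M).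
Proof.
move=> hP; apply: (@ideal_mul_pow_sub _ _ _ _ coord_diffs (minor_diffs k.+1)).
- exact: holo_coord_diffs.
- by apply: J2_doubled_sub => F G; exact: principal_minor2.
- move=> _ _ /products_coord_diffs [io ->] [_ [g [[r [h [ri hh ->]]] hg ->]]].
  (* g supplies the missing difference factor *)
  pose phi b := if unlift ord0 b is Some t then (fun z : V => z ord0 (io t)) else g.
  have hphi b : holo_germ x (phi b).
    by rewrite /phi; case: (unlift ord0 b) => [t|] //; exact: holo_coord.
  have := @diff_minor k.+1 phi h h r r hphi ri ri hh hh.
  congr (Jminors _ _ _ _); apply: funext => w.
  rewrite big_ord_recl /phi unlift_none /minor.
  rewrite (eq_bigr (fun t => w.1 ord0 (io t) - w.2 ord0 (io t))) => [|t _]; last by rewrite liftK.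
  ring.
Qed.
End Submodule.

Theorem lemmaL4p20 (R : realType) (n p k : nat) (X : set 'rV[R[i]]_n)
    (x : 'rV[R[i]]_n) (M : set ('I_p -> 'rV[R[i]]_n -> R[i])) :
  analytic_set X -> X x -> submodule X x M ->
  (ideal_mul (setXX X) (x, x)
     (ideal_pow (setXX X) (x, x) (I_Delta X x) k)
     (Jminors (setXX X) (x, x) 2 (doubled_ideal (Jminors X x k M)))
   `<=` Jminors (setXX X) (x, x) (2 * k) (doubled M)) /\
  (principal_ideal X x (Jminors X x k M) ->
   ideal_mul (setXX X) (x, x)
     (ideal_pow (setXX X) (x, x) (I_Delta X x) k.-1)
     (Jminors (setXX X) (x, x) 2 (doubled_ideal (Jminors X x k M)))
   `<=` Jminors (setXX X) (x, x) (2 * k) (doubled M)).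
Proof.
move=> _ _ hM; split; first exact: partA.
case: k => [|k] hP; first exact: partA.
exact: partB.
Qed.
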